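(* Let $C_0>c_0>0$ and $L>R>0$, and let $Q_L=\{(x,t):0<t<L^2,|x|<L\}$. Suppose $w$ satisfies in the viscosity sense $$\partial_tw-\mathcal P^+(D^2w)\le0\ \text{in }Q_L,\qquad w(x,0)\le c_0\ \text{on }\{t=0\},\qquad w\le C_0\ \text{in }\overline{Q_L}.$$ Then there is a constant $C$ depending only on $C_0,d,\Lambda$ such that $w(x,t)\le c_0+C\frac{R^2}{L^2}$ for $(x,t)\in\overline{Q_R}$.
   Context: $\mathcal P^+(M)=\Lambda\,\mathrm{Tr}M_+-\lambda\,\mathrm{Tr}M_-$ ($0<\lambda<\Lambda$) is Pucci's maximal operator on real symmetric $d\times d$ matrices, $M_\pm\ge0$ the positive and negative parts of $M$. *)

From HB Require Import structures.
From mathcomp Require Import all_boot all_order all_algebra.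
From mathcomp Require Import all_classical all_reals all_analysis.
Set Implicit Arguments. Unset Strict Implicit. Unset Printing Implicit Defensive.
Import Order.TTheory GRing.Theory Num.Theory.
Import numFieldNormedType.Exports.
Local Open Scope ring_scope.
Local Open Scope classical_set_scope.

Section Defs.
Variables (R : realType) (d : nat).

Definition enorm (x : 'rV[R]_d) : R := Num.sqrt (\sum_i (x ord0 i) ^+ 2).

Definition Qcyl (L : R) (x : 'rV[R]_d) (t : R) : Prop :=
  0 < t < L ^+ 2 /\ enorm x < L.
Definition Qcyl_closed (L : R) (x : 'rV[R]_d) (t : R) : Prop :=
  0 <= t <= L ^+ 2 /\ enorm x <= L.

Definition psd (M : 'M[R]_d) : Prop :=
  M^T = M /\ forall v : 'rV[R]_d, 0 <= (v *m M *m v^T) ord0 ord0.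

Definition pos_neg_parts (M P N : 'M[R]_d) : Prop :=
  psd P /\ psd N /\ M = P - N /\ P *m N = 0.

Definition Mpos (M : 'M[R]_d) : 'M[R]_d :=
  xget 0 [set P | exists N, pos_neg_parts M P N].
Definition Mneg (M : 'M[R]_d) : 'M[R]_d := Mpos M - M.

Definition pucci_plus (lam Lam : R) (M : 'M[R]_d) : R :=
  Lam * \tr (Mpos M) - lam * \tr (Mneg M).

Definition ebasis (i : 'I_d) : 'rV[R]_d := delta_mx ord0 i.
Definition dx (i : 'I_d) (phi : 'rV[R]_d -> R -> R) : 'rV[R]_d -> R -> R :=
  fun x t => 'D_(ebasis i) (fun y => phi y t) x.
Definition dt (phi : 'rV[R]_d -> R -> R) : 'rV[R]_d -> R -> R :=
  fun x t => 'D_1 (fun s => phi x s) t.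
Definition hessian (phi : 'rV[R]_d -> R -> R) (x : 'rV[R]_d) (t : R) : 'M[R]_d :=
  \matrix_(i, j) dx j (dx i phi) x t.

Definition uncurry2 (f : 'rV[R]_d -> R -> R) : 'rV[R]_d * R -> R :=
  fun z => f z.1 z.2.

Definition C21 (phi : 'rV[R]_d -> R -> R) : Prop :=
  [/\ (forall x t i, derivable (fun y => phi y t) x (ebasis i)),
      (forall x t i j, derivable (fun y => dx i phi y t) x (ebasis j)),
      (forall x t, derivable (fun s => phi x s) t 1),
      continuous (uncurry2 phi) /\ continuous (uncurry2 (dt phi))
    & forall i j, continuous (uncurry2 (dx i phi)) /\
                  continuous (uncurry2 (dx j (dx i phi)))].

Definition usc_on_closed (L : R) (w : 'rV[R]_d -> R -> R) : Prop :=
  forall x t, Qcyl_closed L x t -> forall e : R, 0 < e ->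
    exists2 del : R, 0 < del & forall y s, Qcyl_closed L y s ->
      enorm (y - x) < del -> `|s - t| < del -> w y s < w x t + e.

Definition visc_subsol (lam Lam L : R) (w : 'rV[R]_d -> R -> R) : Prop :=
  forall (phi : 'rV[R]_d -> R -> R) (x0 : 'rV[R]_d) (t0 : R),
    C21 phi -> Qcyl L x0 t0 ->
    (exists2 r : R, 0 < r & forall y s, Qcyl L y s ->
        enorm (y - x0) < r -> `|s - t0| < r ->
        w y s - phi y s <= w x0 t0 - phi x0 t0) ->
    dt phi x0 t0 - pucci_plus lam Lam (hessian phi x0 t0) <= 0.

End Defs.

From HB Require Import structures.
From mathcomp Require Import all_boot all_order all_algebra.
From mathcomp Require Import all_classical all_reals all_analysis.
From mathcomp Require Import ring lra.
Import Order.TTheory GRing.Theory Num.Theory.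
Import numFieldNormedType.Exports.
Local Open Scope ring_scope.
Local Open Scope classical_set_scope.

(** Compare [w] with the barrier [psi y s = c0 + k |y|^2 + a s], where
    [k = C0 / L^2] and [a = (2 d Lam + 1) k].  On the bottom of the closed
    cylinder [psi >= c0 >= w], and on its lateral boundary and its top
    [psi >= c0 + C0 > w].
    If [w - psi] were positive somewhere, its maximum over the compact
    cylinder (attained, [w] being upper semicontinuous) would lie in the open
    cylinder, where [psi] touches [w] from above; the subsolution property
    would then give [a <= P^+(2 k I) = 2 d Lam k], which is false.  Hence
    [w <= psi <= c0 + (k + a) r^2] on [Q_r], i.e. [C = 2 C0 (d Lam + 1)]. *)

Lemma usc_compact_attains_max {T : topologicalType} {disp : Order.disp_t}
    {X : orderType disp} {K : set T} (G : T -> X) :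
  compact K -> K !=set0 ->
  (forall p c, K p -> (G p < c)%O -> nbhs p [set q | K q -> (G q < c)%O]) ->
  exists2 p, K p & forall q, K q -> (G q <= G p)%O.
Proof.
move=> cK [q0 Kq0] usc.
(* The superlevel sets [{G >= G q'}] form a filter base on [K]; any cluster
   point of it is a maximum. *)
pose F := filter_from K (fun q' => [set q | K q /\ (G q' <= G q)%O]).
have FF : ProperFilter F.
  apply: filter_from_proper; last by move=> q' Kq'; exists q'.
  apply: filter_from_filter; first by exists q0.
  move=> q1 q2 Kq1 Kq2.
  have [le12|/ltW le21] := leP (G q1) (G q2).
  - by exists q2 => // q [Kq le2q]; split; split => //; apply: le_trans le2q.
  - by exists q1 => // q [Kq le1q]; split; split => //; apply: le_trans le1q.
have FK : F K by exists q0 => // q [].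
have [p [Kp clp]] := cK F FF FK.
exists p => // q Kq; rewrite leNgt; apply/negP => Gpq.
have Fq : F [set z | K z /\ (G q <= G z)%O] by exists q.
have [z [[Kz Gqz] /(_ Kz)]] := clp _ _ Fq (usc p _ Kp Gpq).
by rewrite ltNge Gqz.
Qed.

Lemma mxtrace_mul_trmx_ge0 {R : realDomainType} {m n} (A : 'M[R]_(m, n)) :
  0 <= \tr (A *m A^T).
Proof.
apply: sumr_ge0 => i _; rewrite mxE; apply: sumr_ge0 => j _.
by rewrite mxE -expr2 sqr_ge0.
Qed.

Lemma continuous_sum (T : topologicalType) (K : numFieldType) (I : Type)
    (r : seq I) (P : pred I) (f : I -> T -> K^o) :
  (forall i, P i -> continuous (f i)) ->
  continuous (fun x => \sum_(i <- r | P i) f i x).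
Proof.
move=> fc; rewrite -fct_sumE; apply: (big_ind (fun g => continuous g)) => //.
- by move=> x; exact: cvg_cst.
- by move=> g h gc hc x; apply: cvgD; [exact: gc | exact: hc].
Qed.

Lemma is_derive_quadratic_line (K : realFieldType) (V : normedModType K)
    (f : V -> K) (a v : V) (p q : K) :
  (forall h, f (h *: v + a) = f a + h * p + h ^+ 2 * q) -> is_derive a v f p.
Proof.
move=> fq.
have lin_cvg : (fun h : K => p + h * q) @ 0 --> p + 0 * q.
  exact: (@cvgD _ _ _ _ _ (cst p) (fun h => h * q) _ _ (cvg_cst _)
                (cvgM cvg_id (cvg_cst q))).
rewrite mul0r addr0 in lin_cvg.
have quot_cvg : (fun h => h^-1 *: ((f \o shift a) (h *: v) - f a)) @ 0^' --> p.
  apply: cvg_trans (cvg_within_filter _ lin_cvg); apply: near_eq_cvg; near=> h.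
  have h0 : h != 0 by near: h; exact: nbhs_dnbhs_neq.
  by rewrite /= fq /GRing.scale /=; field.
by split; [exact: cvgP quot_cvg | exact: cvg_lim quot_cvg].
Unshelve. all: by end_near.
Qed.

Section Matrices.
Context {R : realType} {d : nat}.

Lemma psd_scalar (c : R) : 0 <= c -> psd (c%:M : 'M[R]_d).
Proof.
move=> c0; split; first by rewrite tr_scalar_mx.
move=> v; rewrite mul_mx_scalar -scalemxAl mxE mulr_ge0 // mxE.
by apply: sumr_ge0 => j _; rewrite mxE -expr2 sqr_ge0.
Qed.

Lemma psd_diag_ge0 {N : 'M[R]_d} i : psd N -> 0 <= N i i.
Proof.
move=> [_ /(_ (delta_mx 0 i))].
by rewrite -rowE trmx_delta -colE !mxE.
Qed.

Lemma mxtrace_psd_ge0 {N : 'M[R]_d} : psd N -> 0 <= \tr N.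
Proof. by move=> psdN; apply: sumr_ge0 => i _; exact: psd_diag_ge0. Qed.

Lemma pos_neg_parts_Mpos (M : 'M[R]_d) :
  (exists P N, pos_neg_parts M P N) -> pos_neg_parts M (Mpos M) (Mneg M).
Proof.
move=> [P [N MPN]].
have [N' MN'] : exists N', pos_neg_parts M (Mpos M) N'.
  by apply: (xgetPex 0 (P := [set P | exists N, pos_neg_parts M P N])); exists P, N.
suff -> : Mneg M = N' by [].
by have [_ [_ [EM _]]] := MN'; rewrite /Mneg {2}EM opprB addrC subrK.
Qed.

Lemma pucci_plus_scalar (lam Lam c : R) :
  0 < c -> pucci_plus lam Lam (c%:M : 'M[R]_d) = Lam * (c *+ d).
Proof.
move=> c0.
have : pos_neg_parts c%:M (Mpos c%:M) (Mneg (c%:M : 'M[R]_d)).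
  apply: pos_neg_parts_Mpos; exists c%:M, 0.
  have psd0 : psd (0 : 'M[R]_d).
    by split=> [|v]; rewrite ?trmx0 // mulmx0 mul0mx mxE.
  by split; [exact: psd_scalar (ltW c0) | rewrite subr0 mulmx0].
rewrite /pucci_plus; set P := Mpos _; set N := Mneg _.
move=> [_ [psdN [EM PN]]].
have EP : P = c%:M + N by rewrite EM subrK.
have trN0 : \tr N = 0.
  have : c * \tr N + \tr (N *m N^T) = 0.
    by rewrite psdN.1 -mxtraceZ -mxtraceD -mul_scalar_mx -mulmxDl -EP PN mxtrace0.
  have := mxtrace_mul_trmx_ge0 N; have := mxtrace_psd_ge0 psdN.
  nra.
by rewrite EP mxtraceD mxtrace_scalar trN0 mulr0 subr0 addr0.
Qed.

End Matrices.

Section Euclid.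
Context {R : realType} {d : nat}.

Definition sqnorm (x : 'rV[R]_d) : R := \sum_i x ord0 i ^+ 2.

Lemma sqnorm_ge0 (x : 'rV[R]_d) : 0 <= sqnorm x.
Proof. by apply: sumr_ge0 => i _; exact: sqr_ge0. Qed.

Lemma enorm_ge0 (x : 'rV[R]_d) : 0 <= enorm x.
Proof. exact: sqrtr_ge0. Qed.

Lemma sqr_enorm (x : 'rV[R]_d) : enorm x ^+ 2 = sqnorm x.
Proof. by rewrite sqr_sqrtr ?sqnorm_ge0. Qed.

Lemma coord_le_enorm (x : 'rV[R]_d) i : `|x ord0 i| <= enorm x.
Proof.
rewrite -sqrtr_sqr ler_sqrt ?sqnorm_ge0 // /sqnorm (bigD1 i) //= lerDl.
by apply: sumr_ge0 => j _; exact: sqr_ge0.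
Qed.

Lemma sqnorm_continuous : continuous sqnorm.
Proof.
apply: continuous_sum => i _ x.
by apply: continuousM; exact: coord_continuous.
Qed.

Lemma enorm_continuous : continuous (@enorm R d).
Proof.
by move=> x; apply: continuous_comp; [exact: sqnorm_continuous | exact: sqrt_continuous].
Qed.

Lemma nbhs_enorm_lt (x : 'rV[R]_d) (e : R) :
  0 < e -> nbhs x [set y | enorm (y - x) < e].
Proof.
have enorm0 : enorm (x - x) = 0.
  by rewrite subrr /enorm big1 ?sqrtr0 // => i _; rewrite mxE expr0n.
have : {for x, continuous (fun y : 'rV[R]_d => enorm (y - x))}.
  apply: (@continuous_comp _ _ _ (fun y : 'rV[R]_d => y - x) (@enorm R d)).
    exact: (cvgB cvg_id (cvg_cst x)).
  exact: enorm_continuous.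
by move=> /cvgr_lt; rewrite enorm0; apply.
Qed.

Lemma nbhs_cylinder (x : 'rV[R]_d) (t e : R) : 0 < e ->
  nbhs (x, t) [set z | enorm (z.1 - x) < e /\ `|z.2 - t| < e].
Proof.
move=> e0; exists ([set y | enorm (y - x) < e], [set s | `|s - t| < e]) => /=.
  split; first exact: nbhs_enorm_lt.
  by apply: filterS (nbhsx_ballx t e e0) => s; rewrite /ball /= distrC.
by move=> [y s] [].
Qed.

Lemma Qcyl_closed_compact (L : R) :
  compact [set z : 'rV[R]_d * R | Qcyl_closed L z.1 z.2].
Proof.
set K := [set z | _].
pose box := [set v : 'rV[R]_d | forall i, `[- L, L]%classic (v ord0 i)]
  `*` `[0, L ^+ 2]%classic.
have box_compact : compact box.
  apply: compact_setX; last exact: segment_compact.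
  by apply: (@rV_compact _ _ (fun=> `[- L, L]%classic)) => _; exact: segment_compact.
have K_box : K `<=` box.
  move=> [y s] [s_itv yL]; split => /=; last by rewrite in_itv.
  by move=> i; rewrite /= in_itv /= -ler_norml (le_trans (coord_le_enorm y i)).
apply: (subclosed_compact _ box_compact K_box).
have -> : K = (snd @^-1` [set s | 0 <= s]) `&` (snd @^-1` [set s | s <= L ^+ 2])
              `&` ((fun z => enorm z.1) @^-1` [set r | r <= L]).
  apply/seteqP; split => -[y s] /=.
  - by move=> [/andP[-> ->] ->].
  - by move=> [[s0 sL] yL]; split => //; apply/andP.
have snd_cont : continuous (@snd 'rV[R]_d R) by move=> z; exact: cvg_snd.
have enorm_fst_cont : continuous (fun z : 'rV[R]_d * R => enorm z.1).
  by move=> z; apply: continuous_comp; [exact: cvg_fst | exact: enorm_continuous].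
by do !apply: closedI; apply: (continuous_closedP _).1;
  [exact: snd_cont | exact: closed_ge | exact: snd_cont | exact: closed_le
  | exact: enorm_fst_cont | exact: closed_le].
Qed.

End Euclid.

Section Barrier.
Context {R : realType} {d : nat}.
Variables (c0 k a : R).

Definition barrier (y : 'rV[R]_d) (s : R) : R := c0 + k * sqnorm y + a * s.

Lemma sqnorm_shift (y : 'rV[R]_d) i h :
  sqnorm (h *: ebasis R i + y) = sqnorm y + h * (2 * y ord0 i) + h ^+ 2.
Proof.
rewrite /sqnorm (bigD1 i) //= [in RHS](bigD1 i) //=.
rewrite (eq_bigr (fun j => y ord0 j ^+ 2)); last first.
  by move=> j ji; rewrite !mxE eqxx (negbTE ji) /= mulr0 add0r.
by rewrite !mxE !eqxx /= mulr1; ring.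
Qed.

#[local] Instance is_derive_barrier_x (y : 'rV[R]_d) s i :
  is_derive y (ebasis R i) (barrier ^~ s) (2 * k * y ord0 i).
Proof.
by apply: (@is_derive_quadratic_line _ _ _ _ _ _ k) => h; rewrite /barrier sqnorm_shift; ring.
Qed.

Lemma dx_barrier i : dx i barrier = fun y _ => 2 * k * y ord0 i.
Proof. by apply/funext => y; apply/funext => s; rewrite /dx derive_val. Qed.

#[local] Instance is_derive_dx_barrier (y : 'rV[R]_d) s i j :
  is_derive y (ebasis R j) (dx i barrier ^~ s) ((2 * k) *+ (i == j)).
Proof.
apply: (@is_derive_quadratic_line _ _ _ _ _ _ 0) => h; rewrite dx_barrier !mxE eqxx.
by case: (j =P i) => [->|_]; rewrite ?eqxx //=; ring.
Qed.

#[local] Instance is_derive_barrier_t (y : 'rV[R]_d) (s : R) :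
  is_derive s 1 (barrier y) a.
Proof.
by apply: (@is_derive_quadratic_line _ _ _ _ _ _ 0) => h; rewrite /barrier /GRing.scale /=; ring.
Qed.

Lemma hessian_barrier x t : hessian barrier x t = (2 * k)%:M.
Proof. by apply/matrixP => i j; rewrite !mxE /dx derive_val. Qed.

Lemma dt_barrier x t : dt barrier x t = a.
Proof. by rewrite /dt derive_val. Qed.

Lemma C21_barrier : C21 barrier.
Proof.
have fst_cont (f : 'rV[R]_d -> R) :
    continuous f -> continuous (fun z : 'rV[R]_d * R => f z.1).
  by move=> fc z; apply: continuous_comp; [exact: cvg_fst | exact: fc].
have cst_cont (c : R) : continuous (fun _ : 'rV[R]_d * R => c).
  by move=> z; exact: cvg_cst.
split.
- by move=> x t i; exact: ex_derive.
- by move=> x t i j; exact: ex_derive.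
- by move=> x t; exact: ex_derive.
- split; last first.
    have -> : uncurry2 (dt barrier) = fun=> a by apply/funext => z; exact: dt_barrier.
    exact: cst_cont.
  have -> : uncurry2 barrier =
      cst c0 + cst k \* (fun z => sqnorm z.1) + cst a \* (fun z => z.2) by [].
  move=> z; apply: continuousD; first apply: continuousD.
  + exact: cst_cont.
  + by apply: continuousM; [exact: cst_cont | exact: (fst_cont _ sqnorm_continuous)].
  + by apply: continuousM; [exact: cst_cont | move=> w; exact: cvg_snd].
- move=> i j; split.
    rewrite dx_barrier.
    apply: (fst_cont (cst (2 * k) \* fun y : 'rV[R]_d => y ord0 i)) => x.
    by apply: continuousM; [exact: cst_continuous | exact: coord_continuous].
  have -> : uncurry2 (dx j (dx i barrier)) = fun=> (2 * k) *+ (i == j).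
    by apply/funext => z; rewrite /uncurry2 /dx derive_val.
  exact: cst_cont.
Qed.

End Barrier.

Section Comparison.
Context {R : realType} {d : nat}.
Implicit Types (L r : R) (x : 'rV[R]_d) (t : R) (w phi : 'rV[R]_d -> R -> R).

Lemma Qcyl_closed_le {r L x t} :
  r <= L -> Qcyl_closed r x t -> Qcyl_closed L x t.
Proof.
move=> rL [/andP[t0 tr] xr]; have r0 := le_trans (enorm_ge0 x) xr.
split; last exact: le_trans rL.
by rewrite t0 (le_trans tr) // lerXn2r // nnegrE (le_trans r0).
Qed.

Lemma barrier_le_Qcyl_closed {c0 k a r : R} {x t} : 0 <= k -> 0 <= a ->
  Qcyl_closed r x t -> barrier c0 k a x t <= c0 + (k + a) * r ^+ 2.
Proof.
move=> k0 a0 [/andP[_ tr] xr].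
have : sqnorm x <= r ^+ 2.
  by rewrite -sqr_enorm lerXn2r // nnegrE ?enorm_ge0 // (le_trans (enorm_ge0 x)).
rewrite /barrier mulrDl -addrA lerD2l => sq.
by rewrite lerD // ler_wpM2l.
Qed.

Lemma usc_on_closed_subr {L w phi} :
  usc_on_closed L w -> continuous (uncurry2 phi) ->
  forall z c, Qcyl_closed L z.1 z.2 -> w z.1 z.2 - phi z.1 z.2 < c ->
  nbhs z [set q | Qcyl_closed L q.1 q.2 -> w q.1 q.2 - phi q.1 q.2 < c].
Proof.
move=> usc phic [x t] c /= Kxt lt_c.
pose e := (c - (w x t - phi x t)) / 2.
have e_gt0 : 0 < e by rewrite divr_gt0 // subr_gt0.
have e2 : e + e = c - (w x t - phi x t) by rewrite /e -splitr.
have [del del0 w_del] := usc x t Kxt e e_gt0.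
have phi_near : \forall q \near (x, t), phi x t - e < uncurry2 phi q.
  by move: (phic (x, t)) => /cvgr_gt; apply; rewrite /uncurry2 /= ltrBlDr ltrDl.
near=> q => Kq.
have [qx qt] : enorm (q.1 - x) < del /\ `|q.2 - t| < del.
  by near: q; exact: nbhs_cylinder.
have : phi x t - e < phi q.1 q.2 by near: q.
have := w_del _ _ Kq qx qt.
lra.
Unshelve. all: by end_near.
Qed.

Section BarrierComparison.
Context {lam Lam L C0 c0 k a : R} {w : 'rV[R]_d -> R -> R}.
Hypotheses (k_gt0 : 0 < k) (a_ge0 : 0 <= a).
Hypotheses (C0_lt_lateral : C0 < c0 + k * L ^+ 2) (C0_lt_top : C0 < c0 + a * L ^+ 2).
Hypothesis pucci_lt_a : Lam * (2 * k *+ d) < a.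
Hypotheses (w_usc : usc_on_closed L w) (w_sub : visc_subsol lam Lam L w).
Hypothesis w_init : forall x, Qcyl_closed L x 0 -> w x 0 <= c0.
Hypothesis w_le_C0 : forall x t, Qcyl_closed L x t -> w x t <= C0.

Lemma barrier_ge_c0 x t : 0 <= t -> c0 <= barrier c0 k a x t.
Proof.
move=> t0; rewrite /barrier -addrA lerDl addr_ge0 ?mulr_ge0 ?sqnorm_ge0 //.
exact: ltW.
Qed.

Lemma le_barrier_outside_Qcyl {x t} :
  Qcyl_closed L x t -> ~ Qcyl L x t -> w x t <= barrier c0 k a x t.
Proof.
move=> Kxt notQ; have [/andP[t0 tL] xL] := Kxt.
have [t_eq0|t_neq0] := eqVneq t 0.
  by move: Kxt; rewrite t_eq0 => /w_init/le_trans; apply; exact: barrier_ge_c0.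
apply: (le_trans (w_le_C0 _ _ Kxt)).
have ksq : 0 <= k * sqnorm x by rewrite mulr_ge0 ?sqnorm_ge0 // ltW.
have [tL'|tL'] := ltP t (L ^+ 2); last first.
  have -> : t = L ^+ 2 by apply/eqP; rewrite eq_le tL.
  by apply/ltW/(lt_le_trans C0_lt_top); rewrite /barrier lerD2r lerDl.
have [xL'|xL'] := ltP (enorm x) L; last first.
  have sqx : sqnorm x = L ^+ 2.
    by rewrite -sqr_enorm; congr (_ ^+ 2); apply/eqP; rewrite eq_le xL.
  apply/ltW/(lt_le_trans C0_lt_lateral).
  by rewrite /barrier sqx lerDl mulr_ge0.
by exfalso; apply: notQ; split => //; rewrite lt_def t_neq0 t0 tL'.
Qed.

Lemma barrier_dominates {x t} : Qcyl_closed L x t -> w x t <= barrier c0 k a x t.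
Proof.
move=> Kxt; rewrite leNgt; apply/negP => w_gt.
pose G (z : 'rV[R]_d * R) := w z.1 z.2 - barrier c0 k a z.1 z.2.
have [_ _ _ [barrier_cont _] _] := @C21_barrier R d c0 k a.
have [p Kp p_max] := usc_compact_attains_max G (Qcyl_closed_compact L)
  (ex_intro _ (x, t) Kxt) (usc_on_closed_subr w_usc barrier_cont).
have Gp : 0 < G p by apply: (lt_le_trans _ (p_max (x, t) Kxt)); rewrite subr_gt0.
have Qp : Qcyl L p.1 p.2.
  apply: contrapT => notQ; have := le_barrier_outside_Qcyl Kp notQ.
  by rewrite /G in Gp; lra.
have p_touch : exists2 r : R, 0 < r & forall y s, Qcyl L y s ->
    enorm (y - p.1) < r -> `|s - p.2| < r -> G (y, s) <= G p.
  exists 1 => // y s [/andP[s0 sL] yL] _ _; apply: (p_max (y, s)).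
  by split; [rewrite !ltW | exact: ltW].
have := w_sub _ _ _ (C21_barrier c0 k a) Qp p_touch.
rewrite hessian_barrier dt_barrier pucci_plus_scalar ?mulr_gt0 //.
by rewrite subr_le0 leNgt pucci_lt_a.
Qed.

End BarrierComparison.
End Comparison.

Theorem lemma6p1 (R : realType) (d : nat) (Lam C0 : R) :
  0 < Lam -> 0 < C0 ->
  exists C : R, forall (lam c0 L r : R) (w : 'rV[R]_d -> R -> R),
    0 < lam -> lam < Lam -> 0 < c0 -> c0 < C0 -> 0 < r -> r < L ->
    usc_on_closed L w ->
    visc_subsol lam Lam L w ->
    (forall x, Qcyl_closed L x 0 -> w x 0 <= c0) ->
    (forall x t, Qcyl_closed L x t -> w x t <= C0) ->
    forall x t, Qcyl_closed r x t -> w x t <= c0 + C * (r ^+ 2 / L ^+ 2).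
Proof.
move=> Lam_gt0 C0_gt0; exists (2 * C0 * (Lam * d%:R + 1)).
move=> lam c0 L r w _ _ c0_gt0 _ r_gt0 rL w_usc w_sub w_init w_le_C0 x t Qr.
have L2_gt0 : 0 < L ^+ 2 by rewrite exprn_gt0 // (lt_trans r_gt0).
pose k := C0 / L ^+ 2; pose a := Lam * (2 * k *+ d) + k.
have k_gt0 : 0 < k by rewrite divr_gt0.
have pucci_lt_a : Lam * (2 * k *+ d) < a by rewrite /a ltrDl.
have k_le_a : k <= a.
  by rewrite /a lerDr; apply/mulr_ge0/mulrn_wge0/mulr_ge0; rewrite ?ltW.
have a_ge0 : 0 <= a := le_trans (ltW k_gt0) k_le_a.
have C0_lt_lateral : C0 < c0 + k * L ^+ 2 by rewrite divfK ?gt_eqF // ltrDr.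
have C0_lt_top : C0 < c0 + a * L ^+ 2.
  by apply: (lt_le_trans C0_lt_lateral); rewrite lerD2l ler_wpM2r // ltW.
have w_le_barrier := barrier_dominates k_gt0 a_ge0 C0_lt_lateral C0_lt_top
  pucci_lt_a w_usc w_sub w_init w_le_C0 (Qcyl_closed_le (ltW rL) Qr).
apply: (le_trans w_le_barrier).
apply: (le_trans (barrier_le_Qcyl_closed (ltW k_gt0) a_ge0 Qr)).
suff -> : 2 * C0 * (Lam * d%:R + 1) * (r ^+ 2 / L ^+ 2) = (k + a) * r ^+ 2 by [].
by rewrite /a /k -mulr_natr; field; rewrite gt_eqF // (lt_trans r_gt0).
Qed.
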